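(* Let $\sigma$ be a finite relational signature and let $\mathcal{A}$ and $\mathcal{B}$ be finite $\sigma$-structures with domains $A$ and $B$. The following are equivalent: (I) there is a surjective homomorphism from $\mathcal{A}^{|A|^{|B|}}$ to $\mathcal{B}$; (II) there exists a positive integer $r<\omega$ such that there is a surjective homomorphism from $\mathcal{A}^r$ to $\mathcal{B}$; (III) $\mathrm{QCSP}(\mathcal{A}) \subseteq \mathrm{QCSP}(\mathcal{B})$; (IV) $\Pi_2\text{-}\mathrm{CSP}(\mathcal{A}) \subseteq \Pi_2\text{-}\mathrm{CSP}(\mathcal{B})$.
   Context: A homomorphism $h:\mathcal{A}\to\mathcal{B}$ is a map $A\to B$ such that for every $p$-ary $R\in\sigma$, $(a_1,\dots,a_p)\in R^{\mathcal{A}}$ implies $(h(a_1),\dots,h(a_p))\in R^{\mathcal{B}}$. For a cardinal $m$, $\mathcal{A}^m$ is the direct (categorical) power: domain $A^m$, and a tuple of elements is in $R^{\mathcal{A}^m}$ iff it is in $R^{\mathcal{A}}$ coordinatewise. A positive Horn (pH) sentence is a first-order sentence built from atomic formulas (relational atoms of $\sigma$ and equalities) using only $\exists$, $\forall$ and $\wedge$; it can be put in prenex form $\forall \bar x_1\exists\bar y_1\cdots\forall\bar x_k\exists\bar y_k\,P$ with $P$ a conjunction of atoms. $\mathrm{QCSP}(\mathcal{A})$ denotes the set of pH sentences true in $\mathcal{A}$; $\Pi_2\text{-}\mathrm{CSP}(\mathcal{A})$ denotes the set of pH sentences of the form $\forall\bar x_1\exists\bar y_1\,P$ ($P$ a conjunction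 of atoms) true in $\mathcal{A}$. *)

From mathcomp Require Import all_boot.
Set Implicit Arguments. Unset Strict Implicit. Unset Printing Implicit Defensive.

Record structure (S : finType) (ar : S -> nat) := Structure {
  dom : finType;
  rel : forall s : S, pred {ffun 'I_(ar s) -> dom}
}.
Arguments Structure {S ar}.
Arguments dom {S ar}.
Arguments rel {S ar}.

Section Structures.
Variables (S : finType) (ar : S -> nat).

Definition is_hom (A B : structure ar) (h : dom A -> dom B) : Prop :=
  forall (s : S) (t : {ffun 'I_(ar s) -> dom A}),
    rel A s t -> rel B s [ffun i => h (t i)].

Definition surj (X Y : Type) (h : X -> Y) : Prop := forall y, exists x, h x = y.

Definition pow_structure (A : structure ar) (m : nat) : structure ar :=
  Structure {ffun 'I_m -> dom A}
    (fun s (t : {ffun 'I_(ar s) -> {ffun 'I_m -> dom A}}) =>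
       [forall k : 'I_m, rel A s [ffun i => t i k]]).

(* positive Horn formulas over variables indexed by nat *)
Inductive pH : Type :=
  | pAtom (s : S) (v : 'I_(ar s) -> nat)
  | pEq (x y : nat)
  | pAnd (f g : pH)
  | pEx (x : nat) (f : pH)
  | pAll (x : nat) (f : pH).

Fixpoint fv (f : pH) : seq nat :=
  match f with
  | pAtom s v => [seq v i | i <- enum 'I_(ar s)]
  | pEq x y => [:: x; y]
  | pAnd f g => fv f ++ fv g
  | pEx x f => filter (predC1 x) (fv f)
  | pAll x f => filter (predC1 x) (fv f)
  end.

Definition sentence (f : pH) : Prop := fv f = [::].

Definition upd (T : Type) (e : nat -> T) (x : nat) (a : T) : nat -> T :=
  fun y => if y == x then a else e y.

Fixpoint sat (A : structure ar) (e : nat -> dom A) (f : pH) {struct f} : Prop :=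
  match f with
  | pAtom s v => rel A s [ffun i => e (v i)]
  | pEq x y => e x = e y
  | pAnd f1 f2 => sat e f1 /\ sat e f2
  | pEx x f1 => exists a : dom A, sat (upd e x a) f1
  | pAll x f1 => forall a : dom A, sat (upd e x a) f1
  end.

Definition holds (A : structure ar) (f : pH) : Prop :=
  forall e : nat -> dom A, @sat A e f.

Definition QCSP (A : structure ar) (f : pH) : Prop := sentence f /\ holds A f.

Fixpoint is_conj_atoms (f : pH) : bool :=
  match f with
  | pAtom _ _ | pEq _ _ => true
  | pAnd f g => is_conj_atoms f && is_conj_atoms g
  | _ => false
  end.

Fixpoint is_ex_block (f : pH) : bool :=
  match f with
  | pEx _ g => is_ex_block g
  | _ => is_conj_atoms f
  end.

Fixpoint is_Pi2 (f : pH) : bool :=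
  match f with
  | pAll _ g => is_Pi2 g
  | _ => is_ex_block f
  end.

Definition Pi2CSP (A : structure ar) (f : pH) : Prop :=
  [/\ sentence f, is_Pi2 f & holds A f].

End Structures.

From Pilot Require Import Defs.
From mathcomp Require Import all_boot.
Set Implicit Arguments. Unset Strict Implicit. Unset Printing Implicit Defensive.

(* Surjective homomorphisms and direct powers preserve positive Horn sentences,
   which gives (II) -> (III).  Conversely, let m = |A|^|B|, index the
   coordinates of A^m by the maps B -> A, and let proj b in A^m be the element
   whose coordinate at a is a b.  The Pi_2 sentence "for all (x_b)_(b in B)
   there are (y_g)_(g in A^m) satisfying the positive diagram of A^m and
   x_b = y_(proj b)" holds in A: take y_g to be the coordinate of g at the map
   b |-> x_b, since coordinate projections are homomorphisms.  Evaluated in B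
   at x_b := b, its witnesses form a homomorphism A^m -> B mapping proj b to b. *)

Section Satisfaction.
Variables (S : finType) (ar : S -> nat).
Implicit Types (A B : structure ar) (f : pH ar).

Lemma eq_sat A f (e e' : nat -> dom A) : e =1 e' -> sat e f -> sat e' f.
Proof.
elim: f e e' => [s v|x y|f IHf g IHg|x f IHf|x f IHf] e e' ee' /=.
- by congr (Defs.rel _ _ _); apply/ffunP=> i; rewrite !ffunE ee'.
- by rewrite !ee'.
- by case=> ef eg; split; [apply: IHf ef | apply: IHg eg].
- by case=> a ef; exists a; apply: IHf ef => y; rewrite /upd; case: eqP.
- by move=> ef a; apply: IHf (ef a) => y; rewrite /upd; case: eqP.
Qed.

Lemma comp_upd (T U : Type) (h : T -> U) (e : nat -> T) x a :
  upd (h \o e) x (h a) =1 h \o upd e x a.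
Proof. by move=> y; rewrite /upd /=; case: eqP. Qed.

Lemma sat_surj_hom A B (h : dom A -> dom B) :
  is_hom h -> surj h -> forall f (e : nat -> dom A), sat e f -> sat (h \o e) f.
Proof.
move=> hom_h surj_h; elim=> [s v|x y|f IHf g IHg|x f IHf|x f IHf] e /=.
- move/hom_h; congr (Defs.rel _ _ _); by apply/ffunP=> i; rewrite !ffunE.
- by move->.
- by case=> ef eg; split; [apply: IHf | apply: IHg].
- by case=> a /IHf ef; exists (h a); apply: eq_sat ef => y; rewrite comp_upd.
- move=> ef b; have [a <-] := surj_h b.
  by apply: eq_sat (IHf _ (ef a)) => y; rewrite comp_upd.
Qed.

Lemma holds_surj_hom A B (h : dom A -> dom B) f :
  is_hom h -> surj h -> holds A f -> holds B f.
Proof.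
move=> hom_h surj_h fA e.
have [g hgK] := fin_all_exists surj_h.
have := sat_surj_hom hom_h surj_h (fA (g \o e)).
by apply: eq_sat => y /=; apply: hgK.
Qed.

Lemma sat_pow A r f (e : nat -> dom (pow_structure A r)) :
  (forall k, sat (fun x => e x k) f) -> sat e f.
Proof.
elim: f e => [s v|x y|f IHf g IHg|x f IHf|x f IHf] e /= ef.
- apply/forallP=> k; move: (ef k); congr (Defs.rel _ _ _).
  by apply/ffunP=> i; rewrite !ffunE.
- by apply/ffunP=> k; apply: ef.
- by split; [apply: IHf | apply: IHg] => k; case: (ef k).
- have [a ea] := fin_all_exists ef; exists [ffun k => a k]; apply: IHf => k.
  by apply: eq_sat (ea k) => y; rewrite /upd; case: eqP; rewrite ?ffunE.
- move=> a; apply: IHf => k.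
  by apply: eq_sat (ef k (a k)) => y; rewrite /upd; case: eqP.
Qed.

Lemma holds_pow A r f : holds A f -> holds (pow_structure A r) f.
Proof. by move=> fA e; apply: sat_pow => k; apply: fA. Qed.

End Satisfaction.

Section Prenex.
Variables (S : finType) (ar : S -> nat).
Implicit Types (A : structure ar) (P : pH ar) (xs ys : seq nat).

(* pH has no truth constant: the empty conjunction is the equation 0 = 0,
   whence the hypothesis 0 \in X of fv_bigAnd_sub. *)
Definition bigAnd (T : Type) (F : T -> pH ar) (s : seq T) : pH ar :=
  foldr (fun t => pAnd (F t)) (@pEq _ ar 0 0) s.

Definition prenexPi2 xs ys P : pH ar := foldr (@pAll _ _) (foldr (@pEx _ _) P ys) xs.

Lemma sat_bigAnd A (e : nat -> dom A) (T : eqType) (F : T -> pH ar) s :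
  sat e (bigAnd F s) <-> {in s, forall t, sat e (F t)}.
Proof.
elim: s => [|t s IHs] /=; first by [].
split=> [[eFt /IHs eFs] u|eFs]; first by rewrite inE => /predU1P[->|/eFs].
split; first by apply: eFs; rewrite mem_head.
by apply/IHs => u su; apply: eFs; rewrite inE su orbT.
Qed.

Lemma is_conj_atoms_bigAnd (T : Type) (F : T -> pH ar) s :
  (forall t, is_conj_atoms (F t)) -> is_conj_atoms (bigAnd F s).
Proof. by move=> FP; elim: s => //= t s ->; rewrite FP. Qed.

Lemma fv_bigAnd_sub (T : eqType) (F : T -> pH ar) s (X : seq nat) :
  0 \in X -> {in s, forall t, {subset fv (F t) <= X}} -> {subset fv (bigAnd F s) <= X}.
Proof.
move=> X0; elim: s => [_ v|t s IHs FX v] /=; first by rewrite !inE orbb => /eqP->.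
rewrite mem_cat => /orP[/(FX t (mem_head _ _))//|]; apply: IHs => u su.
by apply: FX; rewrite inE su orbT.
Qed.

Lemma fv_foldr_pAll P xs : fv (foldr (@pAll _ _) P xs) = [seq v <- fv P | v \notin xs].
Proof.
elim: xs => [|x xs IHxs] /=; first by rewrite filter_predT.
by rewrite IHxs -filter_predI; apply: eq_filter => v; rewrite /= inE negb_or.
Qed.

Lemma fv_foldr_pEx P ys : fv (foldr (@pEx _ _) P ys) = [seq v <- fv P | v \notin ys].
Proof.
elim: ys => [|y ys IHys] /=; first by rewrite filter_predT.
by rewrite IHys -filter_predI; apply: eq_filter => v; rewrite /= inE negb_or.
Qed.

Lemma sentence_prenexPi2 xs ys P :
  {subset fv P <= xs ++ ys} -> sentence (prenexPi2 xs ys P).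
Proof.
move=> PX; rewrite /sentence /prenexPi2 fv_foldr_pAll fv_foldr_pEx -filter_predI.
apply/eqP; rewrite -[_ == _]negbK -has_filter; apply/hasP => -[v /PX].
by rewrite mem_cat /= => /orP[] ->; rewrite ?andbF.
Qed.

Lemma is_Pi2_prenexPi2 xs ys P : is_conj_atoms P -> is_Pi2 (prenexPi2 xs ys P).
Proof.
move=> PP; have : is_ex_block (foldr (@pEx _ _) P ys).
  by elim: ys => [|y ys] //=; case: P PP.
by elim: xs => [|x xs] //=; case: foldr.
Qed.

Lemma sat_foldr_pEx A (e : nat -> dom A) P ys :
  sat e (foldr (@pEx _ _) P ys) <->
  exists2 e', sat e' P & forall y, y \notin ys -> e' y = e y.
Proof.
elim: ys e => [|y ys IHys] e /=.
  split=> [eP|[e' e'P e'e]]; first by exists e.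
  by apply: eq_sat e'P => y; apply: e'e.
split=> [[a /IHys[e' e'P e'e]]|[e' e'P e'e]].
  exists e' => // z; rewrite inE negb_or => /andP[zy zys].
  by rewrite e'e // /upd (negbTE zy).
exists (e' y); apply/IHys; exists e' => // z zys; rewrite /upd.
by case: eqP => [->|/eqP zy] //; apply: e'e; rewrite inE negb_or zy.
Qed.

Lemma sat_foldr_pAll A (e : nat -> dom A) P xs :
  sat e (foldr (@pAll _ _) P xs) <->
  forall e', (forall x, x \notin xs -> e' x = e x) -> sat e' P.
Proof.
elim: xs e => [|x xs IHxs] e /=.
  by split=> [eP e' e'e|eP]; [apply: eq_sat eP => y; rewrite e'e | apply: eP].
split=> [eP e' e'e|eP a].
  apply: (IHxs _).1 (eP (e' x)) _ _ => z zxs; rewrite /upd.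
  by case: eqP => [->|/eqP zx] //; apply: e'e; rewrite inE negb_or zx.
apply/IHxs => e' e'e; apply: eP => z; rewrite inE negb_or => /andP[zx zxs].
by rewrite e'e // /upd (negbTE zx).
Qed.

End Prenex.

Section CanonicalSentence.
Variables (S : finType) (ar : S -> nat) (A B : structure ar).
Hypothesis B_gt0 : 0 < #|dom B|.

Local Notation m := (#|dom A| ^ #|dom B|).
Local Notation G := {ffun 'I_m -> dom A}.

Definition coord (k : 'I_m) : {ffun dom B -> dom A} :=
  enum_val (cast_ord (esym (card_ffun _ _)) k).

Lemma coord_surj (a : {ffun dom B -> dom A}) : exists k, coord k = a.
Proof.
exists (cast_ord (card_ffun _ _) (enum_rank a)).
by rewrite /coord cast_ordK enum_rankK.
Qed.

Definition proj (b : dom B) : G := [ffun k => coord k b].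

Definition xvar (b : dom B) : nat := enum_rank b.
Definition yvar (g : G) : nat := #|dom B| + enum_rank g.

Lemma yvar_inj : injective yvar.
Proof. by move=> g g' /addnI /ord_inj /enum_rank_inj. Qed.

Lemma xvar_notin_yvars b : xvar b \notin [seq yvar g | g <- enum G].
Proof.
apply/mapP => -[g _ xy]; move: (ltn_ord (enum_rank b)).
by rewrite -[val _]/(xvar b) xy /yvar ltnNge leq_addr.
Qed.

Definition diagram_atoms : pH ar :=
  bigAnd (fun s =>
    bigAnd (fun t : {ffun 'I_(ar s) -> G} => pAtom (fun j => yvar (t j)))
      [seq t <- enum {ffun 'I_(ar s) -> G} | Defs.rel (pow_structure A m) s t])
    (enum S).

Definition proj_eqs : pH ar :=
  bigAnd (fun b => @pEq _ ar (xvar b) (yvar (proj b))) (enum (dom B)).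

Definition canonical_sentence : pH ar :=
  prenexPi2 (iota 0 #|dom B|) [seq yvar g | g <- enum G] (pAnd diagram_atoms proj_eqs).

Lemma canonical_sentence_Pi2CSP : Pi2CSP A canonical_sentence.
Proof.
split.
- apply: sentence_prenexPi2 => v.
  set X := iota 0 _ ++ _.
  have X0 : 0 \in X by rewrite mem_cat mem_iota B_gt0.
  have yvarX g : yvar g \in X by rewrite mem_cat map_f ?mem_enum ?orbT.
  rewrite /= mem_cat => /orP[]; apply: fv_bigAnd_sub => //.
  + move=> s _; apply: fv_bigAnd_sub => // t _ u /mapP[j _ ->]; exact: yvarX.
  + move=> b _ u; rewrite !inE => /orP[]/eqP-> //.
    by rewrite mem_cat mem_iota ltn_ord.
- apply: is_Pi2_prenexPi2; apply/andP; split; apply: is_conj_atoms_bigAnd => //.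
  by move=> s; apply: is_conj_atoms_bigAnd.
move=> e; apply/sat_foldr_pAll => e' _.
have [k coord_k] := coord_surj [ffun b => e' (xvar b)].
pose eA y := if [pick g | yvar g == y] is Some g then g k else e' y.
have eA_yvar g : eA (yvar g) = g k.
  by rewrite /eA; case: pickP => [g' /eqP/yvar_inj -> | /(_ g)]; rewrite ?eqxx.
have eA_out y : y \notin [seq yvar g | g <- enum G] -> eA y = e' y.
  by rewrite /eA; case: pickP => // g /eqP <-; rewrite map_f ?mem_enum.
apply/sat_foldr_pEx; exists eA => //; split.
- apply/sat_bigAnd => s _; apply/sat_bigAnd => t.
  rewrite mem_filter /= => /andP[/forallP tA _].
  by move: (tA k); congr (Defs.rel _ _ _); apply/ffunP => j; rewrite !ffunE eA_yvar.
- apply/sat_bigAnd => b _ /=.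
  by rewrite eA_yvar eA_out ?xvar_notin_yvars // ffunE coord_k ffunE.
Qed.

Lemma surj_hom_of_canonical_sentence :
  holds B canonical_sentence ->
  exists h, is_hom (A := pow_structure A m) (B := B) h /\ surj h.
Proof.
have [b0 _] := card_gt0P B_gt0.
pose eB y := nth b0 (enum (dom B)) y.
move=> /(_ eB) /sat_foldr_pAll /(_ eB (fun _ _ => erefl)) /sat_foldr_pEx.
case=> eY [atomsB eqsB] eY_out.
exists (fun g => eY (yvar g)); split.
- move=> s t tA; move/sat_bigAnd: atomsB => /(_ s (mem_enum _ _)) /sat_bigAnd.
  by apply; rewrite mem_filter tA mem_enum.
- move=> b; exists (proj b); move/sat_bigAnd: eqsB => /(_ b (mem_enum _ _)) /= <-.
  by rewrite eY_out ?xvar_notin_yvars // /eB /xvar nth_enum_rank.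
Qed.

End CanonicalSentence.

Theorem mainTheorem1 (S : finType) (ar : S -> nat) (A B : structure ar)
  (hA : 0 < #|dom A|) (hB : 0 < #|dom B|) :
  [<-> (exists h, @is_hom S ar (pow_structure A (#|dom A| ^ #|dom B|)) B h /\ surj h);
       (exists r : nat, 0 < r /\
          exists h, @is_hom S ar (pow_structure A r) B h /\ surj h);
       (forall f : pH ar, QCSP A f -> QCSP B f);
       (forall f : pH ar, Pi2CSP A f -> Pi2CSP B f)].
Proof.
tfae.
- by move=> surj_hom; exists (#|dom A| ^ #|dom B|); rewrite expn_gt0 hA.
- move=> [r [_ [h [hom_h surj_h]]]] f [sf fA]; split=> //.
  exact: holds_surj_hom hom_h surj_h (holds_pow fA).
- by move=> QCSP_sub f [sf Pi2f fA]; have [_ fB] := QCSP_sub f (conj sf fA).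
- move=> Pi2CSP_sub; have [_ _] := Pi2CSP_sub _ (canonical_sentence_Pi2CSP A hB).
  exact: surj_hom_of_canonical_sentence.
Qed.
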